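(* Let $(X,\leq)$ be a bi-directed partially ordered set, let $d$ be a complete metric on $X$, and let $A:X^{2}\to X$ be a mixed monotone operator such that, for some $\varphi\in\Phi$, $$d\big(A(x,y),A(u,v)\big)\leq\varphi\big(\max\{d(x,u),d(y,v)\}\big)\quad\text{for all }x,y,u,v\in X\text{ with }x\leq u,\ y\geq v.$$ Assume that either (b1) $A$ is continuous (with respect to the product topology on $X^2$ induced by $d$), or (b2) every nondecreasing convergent sequence in $X$ is bounded from above by its limit, and every nonincreasing convergent sequence in $X$ is bounded from below by its limit. If there exist $x_{0},y_{0}\in X$ such that $x_{0}\leq A(x_{0},y_{0})$ and $y_{0}\geq A(y_{0},x_{0})$, then there exists $x^{\ast}\in X$ such that $(x^{\ast},x^{\ast})$ is the unique coupled fixed point of $A$ (in particular, $x^{\ast}$ is the unique fixed point of $A$), and $A^{n}(x,y)\to x^{\ast}$ as $n\to\infty$ for all $x,y\in X$.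
   Context: A quasi-ordered set $(X,\leq)$ is bi-directed if every two-element subset of $X$ has both a lower bound and an upper bound. An operator $A:X^2\to X$ is mixed monotone if it is nondecreasing in its first argument and nonincreasing in its second argument. A pair $(x,y)\in X^2$ is a coupled fixed point of $A$ if $A(x,y)=x$ and $A(y,x)=y$; $x$ is a fixed point of $A$ if $A(x,x)=x$. $\Phi$ denotes the set of nondecreasing functions $\varphi:[0,\infty)\to[0,\infty)$ such that $\varphi^{n}(t)\to0$ as $n\to\infty$ for every $t\geq0$, where $\varphi^n$ is the $n$-th iterate of $\varphi$. For bivariate operators $A:X^2\to Y$, $B:Y^2\to Z$, the symmetric composition is $(B\ast A)(x,y)=B(A(x,y),A(y,x))$. The iterates of $A:X^2\to X$ are defined by $A^{0}=P_X$, where $P_X(x,y)=x$, and $A^{n+1}=A\ast A^{n}$ for $n\geq0$. *)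

From Stdlib Require Import Reals.
Open Scope R_scope.

Definition is_metric {X : Type} (d : X -> X -> R) : Prop :=
  (forall x y, 0 <= d x y) /\
  (forall x y, d x y = 0 <-> x = y) /\
  (forall x y, d x y = d y x) /\
  (forall x y z, d x z <= d x y + d y z).

Definition seq_cv {X : Type} (d : X -> X -> R) (u : nat -> X) (l : X) : Prop :=
  forall eps, 0 < eps -> exists N : nat, forall n, (N <= n)%nat -> d (u n) l < eps.

Definition cauchy_seq {X : Type} (d : X -> X -> R) (u : nat -> X) : Prop :=
  forall eps, 0 < eps -> exists N : nat, forall m n, (N <= m)%nat -> (N <= n)%nat ->
    d (u m) (u n) < eps.

Definition complete_metric {X : Type} (d : X -> X -> R) : Prop :=
  is_metric d /\ forall u, cauchy_seq d u -> exists l, seq_cv d u l.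

Definition partial_order {X : Type} (le : X -> X -> Prop) : Prop :=
  (forall x, le x x) /\
  (forall x y, le x y -> le y x -> x = y) /\
  (forall x y z, le x y -> le y z -> le x z).

Definition bi_directed {X : Type} (le : X -> X -> Prop) : Prop :=
  forall x y, (exists z, le z x /\ le z y) /\ (exists w, le x w /\ le y w).

Definition mixed_monotone {X : Type} (le : X -> X -> Prop) (A : X -> X -> X) : Prop :=
  (forall x x' y, le x x' -> le (A x y) (A x' y)) /\
  (forall x y y', le y y' -> le (A x y') (A x y)).

(* phi in Phi: phi maps [0,oo) to [0,oo), nondecreasing there, and
   phi^n(t) -> 0 for all t >= 0 (only values on [0,oo) matter) *)
Definition in_Phi (phi : R -> R) : Prop :=
  (forall t, 0 <= t -> 0 <= phi t) /\
  (forall s t, 0 <= s -> s <= t -> phi s <= phi t) /\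
  (forall t, 0 <= t -> Un_cv (fun n => Nat.iter n phi t) 0).

(* continuity of A : X^2 -> X for the product topology (induced by the max metric) *)
Definition continuous2 {X : Type} (d : X -> X -> R) (A : X -> X -> X) : Prop :=
  forall x y eps, 0 < eps -> exists delta, 0 < delta /\
    forall u v, d x u < delta -> d y v < delta -> d (A x y) (A u v) < eps.

Fixpoint iterA {X : Type} (A : X -> X -> X) (n : nat) (x y : X) : X :=
  match n with
  | O => x
  | S m => A (iterA A m x y) (iterA A m y x)
  end.

(* The proof follows the classical reduction of coupled fixed points to
   ordinary fixed points on the square.

   1. An abstract fixed point theorem (section [OrderedContraction]): let F be
      a self-map of a complete metric space (Y, D) carrying a preorder in which
      every two points have a common upper bound; if F is monotone, satisfies
      D(F p, F q) <= phi(D(p, q)) for comparable p <= q with phi in Phi, and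
      some p0 satisfies p0 <= F p0, then the orbit of p0 is Cauchy, its limit
      is a fixed point (F continuous, or limits of increasing sequences are
      upper bounds), every orbit converges to it, and it is the only one.
   2. The theorem is this result applied to Y = X * X with the max metric,
      the order (x, y) <= (u, v) iff x <= u and v <= y, and the map
      F(x, y) = (A(x, y), A(y, x)), whose iterates are (A^n(x,y), A^n(y,x)).
      Since F commutes with the swap (x, y) |-> (y, x), the unique fixed
      point is invariant under swapping, hence of the form (xs, xs). *)
From Stdlib Require Import Reals Lra Lia.
Open Scope R_scope.

Section ComparisonFunctions.
Variable phi : R -> R.
Hypothesis Hphi : in_Phi phi.

(* phi(t) < t for t > 0: otherwise phi^n(t) >= t for all n. *)
Lemma phi_lt t : 0 < t -> phi t < t.
Proof.
  intros Ht. destruct (Rlt_or_le (phi t) t) as [H|H]; auto. exfalso.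
  assert (Hge : forall n, t <= Nat.iter n phi t).
  { induction n; simpl. lra. apply Rle_trans with (phi t); auto.
    apply (proj1 (proj2 Hphi)); lra. }
  destruct (proj2 (proj2 Hphi) t (Rlt_le _ _ Ht) t Ht) as [N HN].
  specialize (HN N (le_n N)). specialize (Hge N). unfold R_dist in HN.
  rewrite Rminus_0_r, Rabs_right in HN by lra. lra.
Qed.

(* phi(t) <= t for t >= 0 (at t = 0, use phi(0) <= phi(phi(0)) < phi(0)). *)
Lemma phi_le t : 0 <= t -> phi t <= t.
Proof.
  intros Ht. destruct (Rle_lt_or_eq_dec 0 t Ht) as [H|H].
  - left; apply phi_lt; auto.
  - subst t. destruct (Rle_lt_or_eq_dec 0 (phi 0) (proj1 Hphi 0 (Rle_refl 0)))
      as [Hpos|Hz]; [|lra].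
    assert (phi 0 <= phi (phi 0)) by (apply (proj1 (proj2 Hphi)); lra).
    pose proof (phi_lt (phi 0) Hpos). lra.
Qed.

Lemma iter_phi_small t : 0 <= t -> forall eps, 0 < eps ->
  exists N, forall n, (N <= n)%nat -> Nat.iter n phi t < eps.
Proof.
  intros Ht eps He. destruct (proj2 (proj2 Hphi) t Ht eps He) as [N HN].
  exists N. intros n Hn. specialize (HN n Hn). unfold R_dist in HN.
  rewrite Rminus_0_r in HN. pose proof (Rle_abs (Nat.iter n phi t)). lra.
Qed.

End ComparisonFunctions.

Section MetricLimits.
Variables (Y : Type) (D : Y -> Y -> R).
Hypothesis HD : is_metric D.

Lemma limit_unique u l1 l2 : seq_cv D u l1 -> seq_cv D u l2 -> l1 = l2.
Proof.
  destruct HD as [H0 [Heq [Hs Ht]]]. intros H1 H2. apply Heq.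
  destruct (Rle_lt_or_eq_dec 0 (D l1 l2) (H0 l1 l2)) as [Hp|Hz]; [|lra].
  exfalso. destruct (H1 (D l1 l2 / 2)) as [N1 HN1]; [lra|].
  destruct (H2 (D l1 l2 / 2)) as [N2 HN2]; [lra|].
  specialize (HN1 (N1 + N2)%nat ltac:(lia)). specialize (HN2 (N1 + N2)%nat ltac:(lia)).
  pose proof (Ht l1 (u (N1 + N2)%nat) l2) as H. rewrite (Hs l1 (u (N1 + N2)%nat)) in H. lra.
Qed.

Lemma seq_cv_shift u l : seq_cv D u l -> seq_cv D (fun n => u (S n)) l.
Proof. intros H eps He. destruct (H eps He) as [N HN]. exists N. intros n Hn. apply HN; lia. Qed.

Lemma constant_limit u a l : (forall n, u n = a) -> seq_cv D u l -> a = l.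
Proof.
  intros Hu H. apply (limit_unique u); auto.
  intros eps He. exists O. intros n _. rewrite Hu, (proj2 (proj1 (proj2 HD) a a) eq_refl). lra.
Qed.

End MetricLimits.

Section OrderedContraction.
Variables (Y : Type) (rel : Y -> Y -> Prop) (D : Y -> Y -> R) (F : Y -> Y) (phi : R -> R).
Hypothesis HD : is_metric D.
Hypothesis Hphi : in_Phi phi.
Hypothesis rel_refl : forall p, rel p p.
Hypothesis rel_trans : forall p q r, rel p q -> rel q r -> rel p r.
Hypothesis F_mono : forall p q, rel p q -> rel (F p) (F q).
Hypothesis F_contr : forall p q, rel p q -> D (F p) (F q) <= phi (D p q).

Lemma iter_fixed s n : F s = s -> Nat.iter n F s = s.
Proof. intros Hs; induction n; simpl; congruence. Qed.

Lemma iter_shift n p : Nat.iter n F (F p) = F (Nat.iter n F p).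
Proof. induction n; simpl; congruence. Qed.

Lemma iter_mono p q : rel p q -> forall n, rel (Nat.iter n F p) (Nat.iter n F q).
Proof. intros H n; induction n; simpl; auto. Qed.

Lemma iter_contr p q : rel p q ->
  forall n, D (Nat.iter n F p) (Nat.iter n F q) <= Nat.iter n phi (D p q).
Proof.
  intros H n; induction n; simpl. lra.
  eapply Rle_trans; [apply F_contr, iter_mono; auto|].
  apply (proj1 (proj2 Hphi)); auto. apply (proj1 HD).
Qed.

Section IncreasingOrbit.
Variable p0 : Y.
Hypothesis Hp0 : rel p0 (F p0).

Lemma orbit_increasing n k : rel (Nat.iter n F p0) (Nat.iter (n + k) F p0).
Proof.
  induction k as [|k IHk]. rewrite Nat.add_0_r; auto.
  rewrite Nat.add_succ_r. apply rel_trans with (1 := IHk).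
  simpl. rewrite <- iter_shift. apply iter_mono; auto.
Qed.

Lemma orbit_stays_close e N : 0 < e ->
  D (Nat.iter N F p0) (Nat.iter (S N) F p0) <= e - phi e ->
  forall k, D (Nat.iter N F p0) (Nat.iter (N + k) F p0) <= e.
Proof.
  intros He Hstep k; induction k as [|k IHk].
  - rewrite Nat.add_0_r, (proj2 (proj1 (proj2 HD) _ _) eq_refl). lra.
  - destruct HD as [_ [_ [_ Htri]]].
    pose proof (Htri (Nat.iter N F p0) (Nat.iter (S N) F p0) (Nat.iter (S N + k) F p0)).
    assert (D (Nat.iter (S N) F p0) (Nat.iter (S N + k) F p0) <= phi e).
    { eapply Rle_trans; [apply F_contr, orbit_increasing|].
      apply (proj1 (proj2 Hphi)); auto. apply (proj1 HD). }
    rewrite Nat.add_succ_r. simpl in *. lra.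
Qed.

Lemma orbit_cauchy : cauchy_seq D (fun n => Nat.iter n F p0).
Proof.
  intros eps He. set (e := eps / 3). assert (He' : 0 < e) by (unfold e; lra).
  pose proof (phi_lt phi Hphi e He').
  destruct (iter_phi_small phi Hphi (D p0 (F p0)) (proj1 HD _ _) (e - phi e)) as [N HN]; [lra|].
  assert (Hstep : D (Nat.iter N F p0) (Nat.iter (S N) F p0) <= e - phi e).
  { simpl. rewrite <- iter_shift. eapply Rle_trans; [apply iter_contr; auto|].
    left; apply HN; lia. }
  exists N. intros m n Hm Hn. destruct HD as [_ [_ [Hs Htri]]].
  pose proof (orbit_stays_close e N He' Hstep (m - N)) as Hcm.
  pose proof (orbit_stays_close e N He' Hstep (n - N)) as Hcn.
  replace (N + (m - N))%nat with m in Hcm by lia.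
  replace (N + (n - N))%nat with n in Hcn by lia.
  pose proof (Htri (Nat.iter m F p0) (Nat.iter N F p0) (Nat.iter n F p0)).
  rewrite Hs in Hcm. unfold e in *. lra.
Qed.

End IncreasingOrbit.

Lemma orbit_limit_fixed p l :
  seq_cv D (fun n => Nat.iter n F p) l ->
  seq_cv D (fun n => F (Nat.iter n F p)) (F l) -> F l = l.
Proof.
  intros Hl HFl. apply (limit_unique Y D HD (fun n => Nat.iter (S n) F p)); auto.
  apply (seq_cv_shift Y D (fun n => Nat.iter n F p)); auto.
Qed.

Lemma contr_cv_below u l : (forall n, rel (u n) l) ->
  seq_cv D u l -> seq_cv D (fun n => F (u n)) (F l).
Proof.
  intros Hbelow Hu eps He. destruct (Hu eps He) as [N HN]. exists N. intros n Hn.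
  eapply Rle_lt_trans; [apply F_contr; auto|].
  eapply Rle_lt_trans; [apply phi_le, (proj1 HD); auto|]. auto.
Qed.

Lemma continuous_cv u l :
  (forall eps, 0 < eps -> exists delta, 0 < delta /\
     forall q, D l q < delta -> D (F l) (F q) < eps) ->
  seq_cv D u l -> seq_cv D (fun n => F (u n)) (F l).
Proof.
  intros Hcont Hu eps He. destruct (Hcont eps He) as [delta [Hdelta Hc]].
  destruct (Hu delta Hdelta) as [N HN]. exists N. intros n Hn.
  destruct HD as [_ [_ [Hsym _]]]. rewrite Hsym. apply Hc. rewrite Hsym. auto.
Qed.

(* Every orbit converges to a fixed point s, via a common upper bound w of
   the starting point and s. *)
Lemma orbit_cv_fixed s : F s = s ->
  (forall p q, exists w, rel p w /\ rel q w) ->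
  forall q, seq_cv D (fun n => Nat.iter n F q) s.
Proof.
  intros Hs Hdir q eps He. destruct (Hdir q s) as [w [Hqw Hsw]].
  destruct (iter_phi_small phi Hphi (D q w) (proj1 HD _ _) (eps / 2)) as [N1 H1]; [lra|].
  destruct (iter_phi_small phi Hphi (D s w) (proj1 HD _ _) (eps / 2)) as [N2 H2]; [lra|].
  exists (N1 + N2)%nat. intros n Hn.
  pose proof (iter_contr q w Hqw n). pose proof (iter_contr s w Hsw n) as Hsn.
  rewrite iter_fixed in Hsn by auto. destruct HD as [_ [_ [Hsym Htri]]].
  pose proof (Htri (Nat.iter n F q) (Nat.iter n F w) s) as Hq.
  rewrite (Hsym (Nat.iter n F w) s) in Hq.
  pose proof (H1 n ltac:(lia)). pose proof (H2 n ltac:(lia)). lra.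
Qed.

Theorem ordered_contraction_fixed_point :
  (forall u, cauchy_seq D u -> exists l, seq_cv D u l) ->
  (forall p q, exists w, rel p w /\ rel q w) ->
  ((forall p eps, 0 < eps -> exists delta, 0 < delta /\
      forall q, D p q < delta -> D (F p) (F q) < eps) \/
   (forall u l, (forall n, rel (u n) (u (S n))) -> seq_cv D u l ->
      forall n, rel (u n) l)) ->
  forall p0, rel p0 (F p0) ->
  exists s, F s = s /\ (forall t, F t = t -> t = s) /\
            (forall q, seq_cv D (fun n => Nat.iter n F q) s).
Proof.
  intros Hcomp Hdir Hb p0 Hp0.
  destruct (Hcomp _ (orbit_cauchy p0 Hp0)) as [s Hs].
  assert (HFs : F s = s).
  { apply (orbit_limit_fixed p0); auto. destruct Hb as [Hcont | Hmon].
    - apply continuous_cv; auto.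
    - apply contr_cv_below; auto. apply Hmon; auto. intro n.
      rewrite <- Nat.add_1_r. apply orbit_increasing; auto. }
  exists s. split; [auto|]. split.
  - intros t Ht. apply (constant_limit Y D HD (fun n => Nat.iter n F t)).
    + intro n; apply iter_fixed; auto.
    + apply orbit_cv_fixed; auto.
  - apply orbit_cv_fixed; auto.
Qed.

End OrderedContraction.

Section Square.
Context {X : Type}.
Variables (le : X -> X -> Prop) (d : X -> X -> R).

Definition pair_dist (p q : X * X) : R := Rmax (d (fst p) (fst q)) (d (snd p) (snd q)).

Definition pair_le (p q : X * X) : Prop := le (fst p) (fst q) /\ le (snd q) (snd p).

Definition pair_map (A : X -> X -> X) (p : X * X) : X * X :=
  (A (fst p) (snd p), A (snd p) (fst p)).

Definition swap (p : X * X) : X * X := (snd p, fst p).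

Lemma pair_dist_metric : is_metric d -> is_metric pair_dist.
Proof.
  intros [H0 [Heq [Hs Ht]]]. unfold pair_dist. split; [|split; [|split]].
  - intros p q. apply Rle_trans with (d (fst p) (fst q)); auto. apply Rmax_l.
  - intros [x y] [u v]; simpl. split.
    + intros Hz. pose proof (Rmax_l (d x u) (d y v)). pose proof (Rmax_r (d x u) (d y v)).
      pose proof (H0 x u). pose proof (H0 y v).
      f_equal; apply Heq; lra.
    + intros E. injection E as -> ->. rewrite !(proj2 (Heq _ _) eq_refl).
      apply Rmax_left; lra.
  - intros p q. rewrite (Hs (fst p)), (Hs (snd p)). auto.
  - intros p q r.
    pose proof (Rmax_l (d (fst p) (fst q)) (d (snd p) (snd q))).
    pose proof (Rmax_r (d (fst p) (fst q)) (d (snd p) (snd q))).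
    pose proof (Rmax_l (d (fst q) (fst r)) (d (snd q) (snd r))).
    pose proof (Rmax_r (d (fst q) (fst r)) (d (snd q) (snd r))).
    pose proof (Ht (fst p) (fst q) (fst r)). pose proof (Ht (snd p) (snd q) (snd r)).
    apply Rmax_lub; lra.
Qed.

Lemma pair_cv u l : seq_cv pair_dist u l <->
  seq_cv d (fun n => fst (u n)) (fst l) /\ seq_cv d (fun n => snd (u n)) (snd l).
Proof.
  unfold pair_dist. split.
  - intros H. split; intros eps He; destruct (H eps He) as [N HN]; exists N;
      intros n Hn; specialize (HN n Hn).
    + eapply Rle_lt_trans; [apply Rmax_l | exact HN].
    + eapply Rle_lt_trans; [apply Rmax_r | exact HN].
  - intros [H1 H2] eps He. destruct (H1 eps He) as [N1 HN1]. destruct (H2 eps He) as [N2 HN2].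
    exists (N1 + N2)%nat. intros n Hn. apply Rmax_lub_lt; [apply HN1 | apply HN2]; lia.
Qed.

Lemma pair_complete : complete_metric d ->
  forall u, cauchy_seq pair_dist u -> exists l, seq_cv pair_dist u l.
Proof.
  intros [_ Hcomp] u Hu.
  destruct (Hcomp (fun n => fst (u n))) as [x Hx].
  { intros eps He. destruct (Hu eps He) as [N HN]. exists N. intros m n Hm Hn.
    eapply Rle_lt_trans; [apply Rmax_l | exact (HN m n Hm Hn)]. }
  destruct (Hcomp (fun n => snd (u n))) as [y Hy].
  { intros eps He. destruct (Hu eps He) as [N HN]. exists N. intros m n Hm Hn.
    eapply Rle_lt_trans; [apply Rmax_r | exact (HN m n Hm Hn)]. }
  exists (x, y). apply pair_cv. auto.
Qed.

Lemma pair_le_directed : bi_directed le ->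
  forall p q, exists w, pair_le p w /\ pair_le q w.
Proof.
  intros Hbi p q. destruct (proj2 (Hbi (fst p) (fst q))) as [x [Hx1 Hx2]].
  destruct (proj1 (Hbi (snd p) (snd q))) as [y [Hy1 Hy2]].
  exists (x, y). unfold pair_le; simpl. auto.
Qed.

Lemma pair_monotone_limits :
  (forall u l, (forall n, le (u n) (u (S n))) -> seq_cv d u l -> forall n, le (u n) l) ->
  (forall u l, (forall n, le (u (S n)) (u n)) -> seq_cv d u l -> forall n, le l (u n)) ->
  forall u l, (forall n, pair_le (u n) (u (S n))) -> seq_cv pair_dist u l ->
  forall n, pair_le (u n) l.
Proof.
  intros Hup Hdown u l Hmon Hl n. apply pair_cv in Hl as [H1 H2]. split.
  - apply (Hup (fun n => fst (u n))); auto. intro k; apply Hmon.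
  - apply (Hdown (fun n => snd (u n))); auto. intro k; apply Hmon.
Qed.

Variable A : X -> X -> X.

Lemma pair_map_mono : partial_order le -> mixed_monotone le A ->
  forall p q, pair_le p q -> pair_le (pair_map A p) (pair_map A q).
Proof.
  intros [_ [_ Ht]] [M1 M2] [x y] [u v]. unfold pair_le, pair_map; simpl.
  intros [H1 H2]. split.
  - apply Ht with (A u y); auto.
  - apply Ht with (A y u); auto.
Qed.

Lemma pair_map_contr phi : is_metric d ->
  (forall x y u v, le x u -> le v y -> d (A x y) (A u v) <= phi (Rmax (d x u) (d y v))) ->
  forall p q, pair_le p q -> pair_dist (pair_map A p) (pair_map A q) <= phi (pair_dist p q).
Proof.
  intros [_ [_ [Hs _]]] Hcontr [x y] [u v]. unfold pair_le, pair_dist, pair_map; simpl.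
  intros [H1 H2]. apply Rmax_lub; auto.
  rewrite (Hs (A y x)), (Rmax_comm (d x u)), (Hs x u), (Hs y v). auto.
Qed.

Lemma pair_map_continuous : continuous2 d A ->
  forall p eps, 0 < eps -> exists delta, 0 < delta /\
    forall q, pair_dist p q < delta -> pair_dist (pair_map A p) (pair_map A q) < eps.
Proof.
  intros Hc [x y] eps He.
  destruct (Hc x y eps He) as [d1 [Hd1 H1]]. destruct (Hc y x eps He) as [d2 [Hd2 H2]].
  exists (Rmin d1 d2). split; [apply Rmin_glb_lt; auto|].
  intros [u v]. unfold pair_dist, pair_map; simpl. intros Hq.
  pose proof (Rmax_l (d x u) (d y v)). pose proof (Rmax_r (d x u) (d y v)).
  pose proof (Rmin_l d1 d2). pose proof (Rmin_r d1 d2).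
  apply Rmax_lub_lt; [apply H1 | apply H2]; lra.
Qed.

Lemma iter_pair_map n x y :
  Nat.iter n (pair_map A) (x, y) = (iterA A n x y, iterA A n y x).
Proof. revert x y; induction n; intros x y; simpl; auto. rewrite IHn. reflexivity. Qed.

Lemma pair_map_swap p : pair_map A (swap p) = swap (pair_map A p).
Proof. reflexivity. Qed.

End Square.

Theorem theorem2 (X : Type) (le : X -> X -> Prop) (d : X -> X -> R)
  (A : X -> X -> X) (phi : R -> R)
  (Hpo : partial_order le) (Hbi : bi_directed le)
  (Hd : complete_metric d) (Hmm : mixed_monotone le A)
  (Hphi : in_Phi phi)
  (Hcontr : forall x y u v, le x u -> le v y ->
     d (A x y) (A u v) <= phi (Rmax (d x u) (d y v)))
  (Hb : continuous2 d A \/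
        ((forall u l, (forall n, le (u n) (u (S n))) -> seq_cv d u l ->
            forall n, le (u n) l) /\
         (forall u l, (forall n, le (u (S n)) (u n)) -> seq_cv d u l ->
            forall n, le l (u n))))
  (Hx0 : exists x0 y0, le x0 (A x0 y0) /\ le (A y0 x0) y0) :
  exists xs : X,
    (A xs xs = xs /\ A xs xs = xs) /\
    (forall x y, A x y = x /\ A y x = y -> x = xs /\ y = xs) /\
    (forall x, A x x = x -> x = xs) /\
    (forall x y, seq_cv d (fun n => iterA A n x y) xs).
Proof.
  destruct Hx0 as [x0 [y0 Hxy0]]. pose proof Hpo as [Hrefl [_ Htrans]].
  destruct (ordered_contraction_fixed_point (X * X) (pair_le le) (pair_dist d)
              (pair_map A) phi (pair_dist_metric d (proj1 Hd)) Hphi)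
    with (p0 := (x0, y0)) as [[xs ys] [Hfix [Huniq Hcv]]].
  - intro p; split; apply Hrefl.
  - intros p q r [H1 H2] [H3 H4]; split; eauto.
  - apply pair_map_mono; auto.
  - apply pair_map_contr; auto. apply (proj1 Hd).
  - apply pair_complete; auto.
  - apply pair_le_directed; auto.
  - destruct Hb as [Hc | [Hup Hdown]]; [left | right].
    + apply pair_map_continuous; auto.
    + apply pair_monotone_limits; auto.
  - unfold pair_le; simpl; tauto.
  - (* The fixed point is swap-invariant, hence diagonal. *)
    assert (Hsym : swap (xs, ys) = (xs, ys)).
    { apply Huniq. rewrite pair_map_swap, Hfix. reflexivity. }
    injection Hsym as ->. injection Hfix as Hfix _.
    assert (Hcoupled : forall x y, A x y = x /\ A y x = y -> x = xs /\ y = xs).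
    { intros x y [E1 E2]. assert (E : (x, y) = (xs, xs)).
      { apply Huniq. unfold pair_map; simpl. congruence. }
      injection E; auto. }
    exists xs. split; [auto | split; [exact Hcoupled | split]].
    + intros x Hx. apply (Hcoupled x x). auto.
    + intros x y. specialize (Hcv (x, y)) as Hcv. apply pair_cv in Hcv as [Hfst _].
      intros eps He. destruct (Hfst eps He) as [N HN]. exists N. intros n Hn.
      specialize (HN n Hn). rewrite iter_pair_map in HN. exact HN.
Qed.
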